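(* Let $\mathcal M=(W,W_\bot,\preccurlyeq,\sqsubseteq,V)$ be a bi-intuitionistic model, $\Sigma$ a finite set of formulas closed under subformulas, and $\approx$ a strong $\Sigma$-bisimulation on $\mathcal M$ which is also an equivalence relation. If $\sqsubseteq$ is downward confluent in $\mathcal M$, then $\sqsubseteq/{\approx}$ is downward confluent in $\mathcal M/{\approx}$.
   Context: Formulas: $p\mid\bot\mid\varphi\wedge\psi\mid\varphi\vee\psi\mid\varphi\to\psi\mid\Diamond\varphi\mid\Box\varphi$ over a countably infinite set $\mathbb P$. A bi-intuitionistic model $(W,W_\bot,\preccurlyeq,\sqsubseteq,V)$: $\preccurlyeq,\sqsubseteq$ preorders on $W$, $W_\bot$ upward closed under both, $V:\mathbb P\to2^W$ with $V(p)$ $\preccurlyeq$-upward closed and $\supseteq W_\bot$. Satisfaction: $p$ iff $w\in V(p)$; $\bot$ iff $w\in W_\bot$; $\wedge,\vee$ pointwise; $w\models\varphi\to\psi$ iff for all $v\succcurlyeq w$, $v\models\varphi$ implies $v\models\psi$; $w\models\Diamond\varphi$ iff for all $u\succcurlyeq w$ there is $v\sqsupseteq u$ with $v\models\varphi$; $w\models\Box\varphi$ iff $v\models\varphi$ whenever $w\preccurlyeq u\sqsubseteq v$. For $R\subseteq W\times W$ (relative to $\preccurlyeq$): forward confluent if $w\preccurlyeq w'$, $wRv$ imply some $v'$ with $v\preccurlyeq v'$, $w'Rv'$; backward confluent if $wRv\preccurlyeq v'$ implies some $w'$ with $w\preccurlyeq w'Rv'$; downward confluent if $w\preccurlyeq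 vRv'$ implies some $w'$ with $wRw'\preccurlyeq v'$. The $\Sigma$-label of $w$ is $\ell(w)=(\ell^+(w);\ell^\Diamond(w))$ with $\ell^+(w)=\{\varphi\in\Sigma:(\mathcal M,w)\models\varphi\}$, $\ell^\Diamond(w)=\{\varphi\in\Sigma:\forall v\sqsupseteq w,\ (\mathcal M,v)\not\models\varphi\}$. A $\Sigma$-bisimulation is a forward and backward confluent $Z$ with $wZv\Rightarrow\ell(w)=\ell(v)$; a strong $\Sigma$-bisimulation is a $\Sigma$-bisimulation $Z$ such that $Z$ and $Z^{-1}$ are downward confluent. For an equivalence relation $\approx$ on $W$ with classes $[w]$, the quotient $\mathcal M/{\approx}$ has worlds $\{[w]\}$, fallible worlds $\{[w]:w\in W_\bot\}$, $[w]\,(\preccurlyeq/{\approx})\,[v]$ iff there are $w'\approx w$, $v'\approx v$ with $w'\preccurlyeq v'$; $\sqsubseteq/{\approx}$ is the transitive closure of the relation given by $[w]\,R\,[v]$ iff there are $w',v'$ with $w\approx w'\sqsubseteq v'\approx v$; and $[w]\in (V/{\approx})(p)$ iff some $w'\approx w$ lies in $V(p)$. *)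

From Stdlib Require Import List Relations.
Import ListNotations.
Set Implicit Arguments.

Inductive formula : Type :=
| Var : nat -> formula
| Bot : formula
| And : formula -> formula -> formula
| Or  : formula -> formula -> formula
| Imp : formula -> formula -> formula
| Dia : formula -> formula
| Box : formula -> formula.

Definition imm_sub (f : formula) : list formula :=
  match f with
  | Var _ | Bot => []
  | And a b | Or a b | Imp a b => [a; b]
  | Dia a | Box a => [a]
  end.

Definition subformula_closed (S : list formula) : Prop :=
  forall f g, In f S -> In g (imm_sub f) -> In g S.

Record model : Type := Model {
  W : Type;
  Wbot : W -> Prop;
  le : W -> W -> Prop;
  sq : W -> W -> Prop;
  V : nat -> W -> Prop;
  le_refl : forall w, le w w;
  le_trans : forall u v w, le u v -> le v w -> le u w;
  sq_refl : forall w, sq w w;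
  sq_trans : forall u v w, sq u v -> sq v w -> sq u w;
  Wbot_le : forall w v, Wbot w -> le w v -> Wbot v;
  Wbot_sq : forall w v, Wbot w -> sq w v -> Wbot v;
  V_le : forall p w v, V p w -> le w v -> V p v;
  V_bot : forall p w, Wbot w -> V p w
}.

Fixpoint sat (M : model) (w : W M) (f : formula) : Prop :=
  match f with
  | Var p => V M p w
  | Bot => Wbot M w
  | And a b => sat M w a /\ sat M w b
  | Or a b => sat M w a \/ sat M w b
  | Imp a b => forall v, le M w v -> sat M v a -> sat M v b
  | Dia a => forall u, le M w u -> exists v, sq M u v /\ sat M v a
  | Box a => forall u v, le M w u -> sq M u v -> sat M v a
  end.

Definition label_plus (M : model) (S : list formula) (w : W M) (f : formula) : Prop :=
  In f S /\ sat M w f.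
Definition label_dia (M : model) (S : list formula) (w : W M) (f : formula) : Prop :=
  In f S /\ forall v, sq M w v -> ~ sat M v f.

Definition same_label (M : model) (S : list formula) (w v : W M) : Prop :=
  (forall f, label_plus M S w f <-> label_plus M S v f) /\
  (forall f, label_dia M S w f <-> label_dia M S v f).

Definition forward_confluent (X : Type) (le R : X -> X -> Prop) : Prop :=
  forall w w' v, le w w' -> R w v -> exists v', le v v' /\ R w' v'.
Definition backward_confluent (X : Type) (le R : X -> X -> Prop) : Prop :=
  forall w v v', R w v -> le v v' -> exists w', le w w' /\ R w' v'.
Definition downward_confluent (X : Type) (le R : X -> X -> Prop) : Prop :=
  forall w v v', le w v -> R v v' -> exists w', R w w' /\ le w' v'.

Definition bisimulation (M : model) (S : list formula) (Z : W M -> W M -> Prop) : Prop :=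
  forward_confluent (le M) Z /\ backward_confluent (le M) Z /\
  (forall w v, Z w v -> same_label M S w v).

Definition strong_bisimulation (M : model) (S : list formula) (Z : W M -> W M -> Prop) : Prop :=
  bisimulation M S Z /\ downward_confluent (le M) Z /\
  downward_confluent (le M) (fun x y => Z y x).

(* Quotient by an equivalence relation E: worlds are equivalence classes,
   represented as predicates on W equal to the class of some world. *)
Definition eqclass (M : model) (E : W M -> W M -> Prop) (w : W M) : W M -> Prop :=
  fun x => E w x.

Definition qworld (M : model) (E : W M -> W M -> Prop) : Type :=
  { C : W M -> Prop | exists w, C = eqclass M E w }.

Definition qbot (M : model) (E : W M -> W M -> Prop) (C : qworld M E) : Prop :=
  exists w, proj1_sig C w /\ Wbot M w.

Definition qle (M : model) (E : W M -> W M -> Prop) (C D : qworld M E) : Prop :=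
  exists w v, proj1_sig C w /\ proj1_sig D v /\ le M w v.

Definition qsq_step (M : model) (E : W M -> W M -> Prop) (C D : qworld M E) : Prop :=
  exists w v, proj1_sig C w /\ proj1_sig D v /\ sq M w v.

Definition qsq (M : model) (E : W M -> W M -> Prop) : qworld M E -> qworld M E -> Prop :=
  clos_trans (qworld M E) (@qsq_step M E).

Definition qV (M : model) (E : W M -> W M -> Prop) (p : nat) (C : qworld M E) : Prop :=
  exists w, proj1_sig C w /\ V M p w.

From Stdlib Require Import List Relations.

(* The quotient relation sq/E is the transitive closure of the one-step
   relation qsq_step, so the proof has two independent parts.
   - Downward confluence is preserved by transitive closure, for an arbitrary
     relation on an arbitrary type ([downward_confluent_clos_trans]).
   - The one-step relation is downward confluent ([qsq_step_downward_confluent]):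
     given [w] le/E [v] and [v] qsq_step [v'], pick representatives
     w <= v, v1 sq v' with v E v1; downward confluence of E^{-1} moves w to
     some w' E w with w' <= v1, and downward confluence of sq in M then gives
     w' sq w'' <= v', so [w] qsq_step [w''] le/E [v']. *)

Lemma downward_confluent_clos_trans (X : Type) (le R : X -> X -> Prop) :
  downward_confluent le R -> downward_confluent le (clos_trans X R).
Proof.
  intros HR w v v' Hwv Hvv'. revert w Hwv.
  induction Hvv' as [v v' Hstep | v v2 v' _ IH1 _ IH2]; intros w Hwv.
  - destruct (HR w v v' Hwv Hstep) as [w' [Hww' Hw'v']].
    exists w'. split; [apply t_step|]; assumption.
  - destruct (IH1 w Hwv) as [w2 [Hww2 Hw2v2]].
    destruct (IH2 w2 Hw2v2) as [w' [Hw2w' Hw'v']].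
    exists w'. split; [apply t_trans with w2|]; assumption.
Qed.

Section Quotient.

Variable M : model.
Variable E : W M -> W M -> Prop.
Hypothesis E_equiv : equivalence (W M) E.

Definition qclass (w : W M) : qworld M E :=
  exist _ (eqclass M E w) (ex_intro _ w eq_refl).

Lemma qclass_mem (w : W M) : proj1_sig (qclass w) w.
Proof. apply (equiv_refl _ _ E_equiv). Qed.

Lemma qworld_mem_related (C : qworld M E) (x y : W M) :
  proj1_sig C x -> proj1_sig C y -> E x y.
Proof.
  destruct E_equiv as [_ Etrans Esym].
  destruct C as [C [c ->]]; simpl; unfold eqclass; intros Hx Hy.
  apply Etrans with c; [apply Esym|]; assumption.
Qed.

Lemma qworld_mem_closed (C : qworld M E) (x y : W M) :
  proj1_sig C x -> E x y -> proj1_sig C y.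
Proof.
  destruct E_equiv as [_ Etrans _].
  destruct C as [C [c ->]]; simpl; unfold eqclass; intros Hx Hxy.
  apply Etrans with x; assumption.
Qed.

Hypothesis E_conv_downward : downward_confluent (le M) (fun x y => E y x).
Hypothesis sq_downward : downward_confluent (le M) (sq M).

Lemma qsq_step_downward_confluent : downward_confluent (@qle M E) (@qsq_step M E).
Proof.
  intros C D D' [w [v [Hw [Hv Hwv]]]] [v1 [v' [Hv1 [Hv' Hv1v']]]].
  assert (Ev1v : E v1 v) by (apply (qworld_mem_related D); assumption).
  destruct (E_conv_downward w v v1 Hwv Ev1v) as [w' [Ew'w Hw'v1]].
  destruct (sq_downward w' v1 v' Hw'v1 Hv1v') as [w'' [Hw'w'' Hw''v']].
  exists (qclass w''). split.
  - exists w', w''. repeat split; [| apply qclass_mem | assumption].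
    apply (qworld_mem_closed C w); [| apply (equiv_sym _ _ E_equiv)]; assumption.
  - exists w'', v'. repeat split; [apply qclass_mem | assumption | assumption].
Qed.

End Quotient.

Theorem mainTheorem14 (M : model) (S : list formula) (E : W M -> W M -> Prop) :
  subformula_closed S ->
  strong_bisimulation M S E ->
  equivalence (W M) E ->
  downward_confluent (le M) (sq M) ->
  downward_confluent (@qle M E) (@qsq M E).
Proof.
  intros _ [_ [_ E_conv_downward]] E_equiv sq_downward.
  apply downward_confluent_clos_trans.
  exact (@qsq_step_downward_confluent M E E_equiv E_conv_downward sq_downward).
Qed.
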